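(* Let $(H,+,\circ)$ be a commutative multiplicative hyperring with identity $1$ such that $1+1\in U(H)$, and let $P$ be a nonzero sdf-absorbing strong $\mathcal{C}$-hyperideal of $H$. Then $P$ is a prime hyperideal of $H$.
   Context: A commutative multiplicative hyperring $(H,+,\circ)$ consists of an abelian group $(H,+)$ and an associative, commutative hyperoperation $\circ: H\times H\to P^*(H)$ with $x\circ(y+z)\subseteq x\circ y+x\circ z$ and $x\circ(-y)=-(x\circ y)=(-x)\circ y$. For subsets $A,B$, $A\circ B=\bigcup_{a\in A,b\in B}a\circ b$, $A\pm B=\{a\pm b\}$; $x^2=x\circ x$. Identity: $x\in x\circ 1$ for all $x$. $U(H)$ is the set of units, i.e. $x$ with $1\in x\circ y$ for some $y\in H$. A hyperideal is a nonempty $P$ with $x-y\in P$ and $r\circ x\subseteq P$ for $x,y\in P$, $r\in H$; it is prime if proper and $x\circ y\subseteq P$ implies $x\in P$ or $y\in P$. Let $\mathcal{C}=\{c_1\circ\cdots\circ c_n: c_i\in H\}$ and $\mathfrak{C}=\{\sum_{i=1}^m C_i: C_i\in\mathcal{C}\}$; $P$ is a strong $\mathcal{C}$-hyperideal if for every $D\in\mathfrak{C}$, $D\cap P\neq\varnothing$ implies $D\subseteq P$. A proper hyperideal $P$ is sdf-absorbing if whenever $0\neq x,y\in H$ and $x^2-y^2\subseteq P$, then $x-y\in P$ or $x+y\in P$. *)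

From HB Require Import structures.
From mathcomp Require Import all_boot all_algebra.
Set Implicit Arguments. Unset Strict Implicit. Unset Printing Implicit Defensive.
Import GRing.Theory.
Local Open Scope ring_scope.

Definition hset (H : Type) := H -> Prop.

Section Hyperring.
Variables (H : zmodType) (hm : H -> H -> hset H).

Definition setprod (A B : hset H) : hset H :=
  fun z => exists a b, A a /\ B b /\ hm a b z.
Definition setadd (A B : hset H) : hset H :=
  fun z => exists a b, A a /\ B b /\ z = a + b.
Definition setsub (A B : hset H) : hset H :=
  fun z => exists a b, A a /\ B b /\ z = a - b.
Definition sset1 (x : H) : hset H := fun z => z = x.
Definition subset (A B : hset H) := forall z, A z -> B z.
Definition seteq (A B : hset H) := forall z, A z <-> B z.

Definition comm_mult_hyperring : Prop :=
  [/\ (forall x y, exists z, hm x y z),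
      (forall x y z, seteq (setprod (setprod (sset1 x) (sset1 y)) (sset1 z))
                           (setprod (sset1 x) (setprod (sset1 y) (sset1 z)))),
      (forall x y, seteq (hm x y) (hm y x)),
      (forall x y z, subset (hm x (y + z)) (setadd (hm x y) (hm x z))) &
      (forall x y, seteq (hm x (- y)) (fun w => hm x y (- w)) /\
                   seteq (hm (- x) y) (fun w => hm x y (- w)))].

Definition has_identity (one : H) : Prop := forall x, hm x one x.

Definition is_unit (one x : H) : Prop := exists y, hm x y one.

Definition hyperideal (P : hset H) : Prop :=
  [/\ exists x, P x,
      (forall x y, P x -> P y -> P (x - y)) &
      (forall r x, P x -> subset (hm r x) P)].

Definition proper (P : hset H) : Prop := exists x, ~ P x.

Definition prime_hyperideal (P : hset H) : Prop :=
  [/\ hyperideal P, proper P &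
      forall x y, subset (hm x y) P -> P x \/ P y].

(* c_1 o c_2 o ... o c_n  (n >= 1), given as head x and tail xs *)
Fixpoint hprod (x : H) (xs : seq H) : hset H :=
  match xs with
  | [::] => sset1 x
  | y :: ys => setprod (sset1 x) (hprod y ys)
  end.

Fixpoint hsum (C : hset H) (Cs : seq (hset H)) : hset H :=
  match Cs with
  | [::] => C
  | D :: Ds => setadd C (hsum D Ds)
  end.

Definition in_frakC (D : hset H) : Prop :=
  exists (x0 : H) (xs0 : seq H) (l : seq (H * seq H)),
    seteq D (hsum (hprod x0 xs0) (map (fun p => hprod p.1 p.2) l)).

Definition strong_C_hyperideal (P : hset H) : Prop :=
  hyperideal P /\
  forall D, in_frakC D -> (exists z, D z /\ P z) -> subset D P.

Definition sdf_absorbing (P : hset H) : Prop :=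
  [/\ hyperideal P, proper P &
      forall x y, x != 0 -> y != 0 ->
        subset (setsub (hm x x) (hm y y)) P -> P (x - y) \/ P (x + y)].

Definition nonzero_set (P : hset H) : Prop := exists x, P x /\ x != 0.

End Hyperring.

From Pilot Require Import Defs.
From mathcomp Require Import all_boot all_algebra.
Set Implicit Arguments. Unset Strict Implicit. Unset Printing Implicit Defensive.
Import GRing.Theory.
Local Open Scope ring_scope.

(* Let a o b be contained in P.  If a = b or a = -b then a o a lies in P, and
   sdf-absorption applied to a and a nonzero element of P puts a in P.
   Otherwise expand (a + b)^2 - (a - b)^2: every element is a sum of elements
   of a o b, b o a and of differences of two elements of c o c (c = a, b),
   and the strong C-property puts the latter in P because c o c + c o (-c)
   contains 0.  So sdf-absorption for a + b, a - b gives 2a or 2b in P, and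
   halving (2 is a unit) concludes. *)

Section Hyperideal.
Variables (H : zmodType) (hm : H -> H -> hset H) (P : hset H).
Hypothesis idealP : hyperideal hm P.

Lemma hyperidealB x y : P x -> P y -> P (x - y).
Proof. by case: idealP => _ + _; apply. Qed.

Lemma hyperideal0 : P 0.
Proof.
by case: idealP => -[x Px] _ _; rewrite -(subrr x); apply: hyperidealB.
Qed.

Lemma hyperidealN x : P x -> P (- x).
Proof. by move=> Px; rewrite -sub0r; apply: hyperidealB => //; apply: hyperideal0. Qed.

Lemma hyperidealD x y : P x -> P y -> P (x + y).
Proof. by move=> Px Py; rewrite -[y]opprK; apply/hyperidealB/hyperidealN. Qed.

Lemma hyperidealNE x : P (- x) -> P x.
Proof. by move/hyperidealN; rewrite opprK. Qed.

Lemma hyperideal_hm r x w : P x -> hm r x w -> P w.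
Proof. by case: idealP => _ _ + Px; apply. Qed.

End Hyperideal.

Section Hyperring.
Variables (H : zmodType) (hm : H -> H -> hset H).
Hypothesis hmH : comm_mult_hyperring hm.

Lemma hmC x y w : hm x y w -> hm y x w.
Proof. by case: hmH => _ _ hmC _ _; case: (hmC x y w). Qed.

Lemma hmNr x y w : hm x (- y) w <-> hm x y (- w).
Proof. by case: hmH => _ _ _ _ /(_ x y) [+ _]; apply. Qed.

Lemma hmNl x y w : hm (- x) y w <-> hm x y (- w).
Proof. by case: hmH => _ _ _ _ /(_ x y) [_]; apply. Qed.

Lemma hmNNr x y w : hm x y w -> hm x (- y) (- w).
Proof. by move=> hw; apply/hmNr; rewrite opprK. Qed.

Lemma hmDr x y z w :
  hm x (y + z) w -> exists s t, [/\ hm x y s, hm x z t & w = s + t].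
Proof.
case: hmH => _ _ _ + _ => /(_ x y z w) hD /hD [s [t [hs [ht ->]]]].
by exists s, t.
Qed.

Lemma hmDl x y z w :
  hm (x + y) z w -> exists s t, [/\ hm x z s, hm y z t & w = s + t].
Proof.
move=> /hmC /hmDr [s [t [hs ht ->]]].
by exists s, t; split => //; apply: hmC.
Qed.

Lemma hm_assoc x y z v w :
  hm y z v -> hm x v w -> exists u, hm x y u /\ hm u z w.
Proof.
move=> hv hw; case: hmH => _ /(_ x y z w) [_ hA] _ _ _.
have [u [z' [[x' [y' [-> [-> hu]]]] [-> huw]]]] :
    setprod hm (setprod hm (sset1 x) (sset1 y)) (sset1 z) w.
  by apply: hA; exists x, v; do !split => //; exists y, z.
by exists u.
Qed.

End Hyperring.

Section StrongC.
Variables (H : zmodType) (hm : H -> H -> hset H) (P : hset H).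
Hypothesis strongP : strong_C_hyperideal hm P.

Let idealP : hyperideal hm P. Proof. by case: strongP. Qed.

Lemma setadd_hm_in_frakC c1 c2 d1 d2 :
  in_frakC hm (setadd (hm c1 c2) (hm d1 d2)).
Proof.
have hm1 c d : seteq (setprod hm (sset1 c) (sset1 d)) (hm c d).
  by move=> z; split => [[_ [_ [-> [-> //]]]]|hz]; exists c, d.
exists c1, [:: c2], [:: (d1, [:: d2])] => z /=.
by split=> -[s [t [hs [ht ->]]]]; exists s, t; (split; [|split]); try apply/hm1.
Qed.

Lemma strongC_add c1 c2 d1 d2 s t s' t' :
  hm c1 c2 s -> hm d1 d2 t -> P (s + t) ->
  hm c1 c2 s' -> hm d1 d2 t' -> P (s' + t').
Proof.
move=> hs ht Pst hs' ht'; case: strongP => _ /(_ _ (setadd_hm_in_frakC c1 c2 d1 d2)).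
apply; first by exists (s + t); split => //; exists s, t.
by exists s', t'.
Qed.

Hypothesis hmH : comm_mult_hyperring hm.

(* c o c + c o (-c) contains s + (-s) = 0. *)
Lemma strongC_hm_sqB c s s' : hm c c s -> hm c c s' -> P (s - s').
Proof.
move=> hs hs'; apply: (strongC_add hs (hmNNr hmH hs) _ hs (hmNNr hmH hs')).
by rewrite subrr; apply: hyperideal0 idealP.
Qed.

Lemma strongC_halve one u a :
  has_identity hm one -> hm (one + one) u one -> P (a + a) -> P a.
Proof.
move=> hid hu Paa.
have [w [hw hwu]] := hm_assoc hmH hu (hid a).
apply: (hyperideal_hm idealP _ (hmC hmH hwu)).
have [s [t [hs ht ->]]] := hmDr hmH hw.
exact: strongC_add (hid a) (hid a) Paa hs ht.
Qed.

Lemma strongC_sq_addB_sq_sub a b : Defs.subset (hm a b) P ->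
  Defs.subset (setsub (hm (a + b) (a + b)) (hm (a - b) (a - b))) P.
Proof.
move=> abP _ [s [s' [hs [hs' ->]]]].
have [s1 [s2 [/(hmDr hmH) [p [q [hp hq ->]]] /(hmDr hmH) [r [t [hr ht ->]]] ->]]] :=
  hmDl hmH hs.
have [s1' [s2' [/(hmDr hmH) [p' [q' [hp' hq' ->]]] /(hmNl hmH) hs2' ->]]] :=
  hmDl hmH hs'.
have [r' [t' [hr' ht' /eqP]]] := hmDr hmH hs2'; rewrite eqr_oppLR => /eqP ->.
have -> : p + q + (r + t) - (p' + q' + - (r' + t')) =
          (p - p') + (t - - t') + q + r - q' + r'.
  by rewrite !opprD !opprK !addrA; rewrite [LHS](ACl (1*5*4*8*2*3*6*7)%AC).
have Pba w : hm b a w -> P w by move=> /(hmC hmH) /abP.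
have Pq' : P q' by apply: (hyperidealNE idealP); apply/abP/(hmNr hmH).
have Ppp' := strongC_hm_sqB hp hp'.
have Ptt' : P (t - - t') by apply: strongC_hm_sqB ht _; apply/(hmNr hmH).
exact: (hyperidealD idealP (hyperidealB idealP (hyperidealD idealP
  (hyperidealD idealP (hyperidealD idealP Ppp' Ptt') (abP _ hq)) (Pba _ hr)) Pq')
  (Pba _ hr')).
Qed.

End StrongC.

Lemma sdf_absorbing_mem_of_sq (H : zmodType) (hm : H -> H -> hset H) (P : hset H) a :
  nonzero_set P -> sdf_absorbing hm P -> Defs.subset (hm a a) P -> P a.
Proof.
move=> [i [Pi i_neq0]] [idealP _ sdfP] aaP.
have [->|a_neq0] := eqVneq a 0; first exact: hyperideal0 idealP.
have [_ [s [t [hs [ht ->]]]]|Pai|Pai] := sdfP a i a_neq0 i_neq0.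
- exact/(hyperidealB idealP)/(hyperideal_hm idealP Pi ht)/aaP.
- by rewrite -(subrK i a); apply: (hyperidealD idealP Pai Pi).
- by rewrite -(addrK i a); apply: (hyperidealB idealP Pai Pi).
Qed.

Theorem mainTheorem13 (H : zmodType) (hm : H -> H -> hset H) (one : H)
  (P : hset H) :
  comm_mult_hyperring hm ->
  has_identity hm one ->
  is_unit hm one (one + one) ->
  nonzero_set P ->
  sdf_absorbing hm P ->
  strong_C_hyperideal hm P ->
  prime_hyperideal hm P.
Proof.
move=> hmH hid [u hu] nzP sdfP strongP.
have [idealP properP sdf] := sdfP.
split=> // a b abP.
have aaP := sdf_absorbing_mem_of_sq nzP sdfP.
have [/eqP|ab_neq0] := eqVneq (a + b) 0.
  rewrite addrC addr_eq0 => /eqP b_eq; left; apply: aaP => w /(hmNNr hmH).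
  by rewrite -b_eq => /abP /(hyperidealNE idealP).
have [/eqP|ab'_neq0] := eqVneq (a - b) 0.
  by rewrite subr_eq0 => /eqP a_eq; left; apply: aaP; rewrite {2}a_eq.
have [|Pbb|Paa] := sdf _ _ ab_neq0 ab'_neq0.
- exact: strongC_sq_addB_sq_sub.
- right; apply: (strongC_halve strongP hmH hid hu).
  by rewrite opprB addrC addrA subrK in Pbb.
- left; apply: (strongC_halve strongP hmH hid hu).
  by rewrite addrACA subrr addr0 in Paa.
Qed.
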